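(* Let $G$ be a finite group and $H$ a normal subgroup of $G$. Suppose that $|H|$ and $|G/H|$ are odd and that both $H$ and the quotient group $G/H$ are symmetric harmonious. Then $G$ is symmetric harmonious.
   Context: Let $G$ be a finite group of order $\ell$ with identity $1_G$. A harmonious sequence in $G$ is an ordering $g_0,g_1,\ldots,g_{\ell-1}$ of all the elements of $G$ such that the consecutive products $g_0g_1, g_1g_2, \ldots, g_{\ell-2}g_{\ell-1}, g_{\ell-1}g_0$ are also all the elements of $G$, each appearing exactly once. $G$ is called symmetric harmonious if it admits a harmonious sequence $g_0,\ldots,g_{\ell-1}$ that additionally satisfies $g_i g_{\ell-i}=1_G$ for all $1\le i\le \ell-1$. *)

From mathcomp Require Import all_boot all_fingroup.
Set Implicit Arguments. Unset Strict Implicit. Unset Printing Implicit Defensive.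
Local Open Scope group_scope.

Definition harmonious_seq (gT : finGroupType) (G : {set gT}) (s : seq gT) :=
  let l := size s in
  perm_eq s (enum G) /\
  perm_eq [seq nth 1 s i * nth 1 s ((i.+1) %% l) | i <- iota 0 l] (enum G).

Definition symmetric_harmonious (gT : finGroupType) (G : {set gT}) :=
  exists s : seq gT, harmonious_seq G s /\
    forall i, 1 <= i < size s -> nth 1 s i * nth 1 s (size s - i) = 1.

(* Write n = |H|, m = |G/H| = 2r + 1, and let h_0, ..., h_{n-1} and
   k_0, ..., k_{m-1} be symmetric harmonious sequences of H and G/H; both
   start with 1 because the groups have odd order.  Lift k_1 k_2 ... k_j to
   P_j in G and list G in n blocks of length m: position j + m q carries
   P_{j-1}^-1 h_q P_j when j <= r and P_{m-j}^-1 h_{q+1} P_{m-j-1} when j > r.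
   This element lies in the coset k_j, and inside a block the P's telescope,
   so consecutive products are conjugates of h_q^2, h_q h_{q+1} or h_{q+1}^2
   lying in the coset k_j k_{j+1}.  As squaring is injective in the odd group
   H, for each j the n entries in the coset k_j are distinct, and so are the
   n products in the coset k_j k_{j+1}.  Positions j + m q and
   (m - j) + m (n - 1 - q) carry mutually inverse elements. *)
From mathcomp Require Import all_boot all_fingroup all_solvable zify.
Set Implicit Arguments. Unset Strict Implicit. Unset Printing Implicit Defensive.
Local Open Scope group_scope.

Lemma sqr_inj_odd (gT : finGroupType) (A : {group gT}) :
  odd #|A| -> {in A &, injective (fun x => x * x)}.
Proof.
move=> oddA; have coA2 : coprime #|A| 2 by rewrite coprimen2.
by apply: can_in_inj (expgK coA2) => x _; rewrite expg2.
Qed.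

Lemma coset_sandwich (gT : finGroupType) (H : {group gT}) a x b :
  a \in 'N(H) -> x \in H -> b \in 'N(H) ->
  coset H (a^-1 * x * b) = (coset H a)^-1 * coset H b.
Proof.
move=> aN xH bN; have xN : x \in 'N(H) by apply: subsetP (normG H) x xH.
by rewrite !morphM ?groupM ?groupV // morphV // [coset_morphism H x](coset_id xH) mulg1.
Qed.

Lemma repr_quotient_mem (gT : finGroupType) (G H : {group gT}) xbar :
  H <| G -> xbar \in G / H -> repr xbar \in G.
Proof.
move=> nsHG GHx; rewrite -(quotientGK nsHG) mem_morphpre ?repr_coset_norm //.
by rewrite [coset_morphism H (repr _)]coset_reprK.
Qed.

Lemma perm_enum_mkseq (T : finType) (A : {pred T}) (f : nat -> T) N :
  N = #|A| -> (forall p, p < N -> f p \in A) -> {in gtn N &, injective f} ->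
  perm_eq (mkseq f N) (enum A).
Proof.
move=> NA fA /mkseq_uniqP uniq_f; apply: uniq_perm; rewrite ?enum_uniq //.
have sub_f : {subset mkseq f N <= enum A}.
  by move=> x /mapP[p]; rewrite mem_iota add0n => /fA fpA ->; rewrite mem_enum.
have [|_ //] := uniq_min_size uniq_f sub_f.
by rewrite size_mkseq -cardE NA.
Qed.

Lemma harmonious_mkseq (gT : finGroupType) (A : {group gT}) (f : nat -> gT) N :
  N = #|A| -> (forall p, p < N -> f p \in A) -> {in gtn N &, injective f} ->
  {in gtn N &, injective (fun p => f p * f (p.+1 %% N))} ->
  harmonious_seq A (mkseq f N).
Proof.
move=> NA fA f_inj fprod_inj; split; first exact: perm_enum_mkseq.
have -> : [seq nth 1 (mkseq f N) i * nth 1 (mkseq f N) (i.+1 %% size (mkseq f N))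
          | i <- iota 0 (size (mkseq f N))] = mkseq (fun p => f p * f (p.+1 %% N)) N.
  rewrite size_mkseq; apply/eq_in_map => p; rewrite mem_iota add0n => pN.
  by rewrite !nth_mkseq ?ltn_pmod //; lia.
by apply: perm_enum_mkseq => // p pN; rewrite groupM ?fA ?ltn_pmod //; lia.
Qed.

Lemma mixed_radix_decomp m n p : p < (m * n)%N ->
  exists j q, [/\ j < m, q < n & p = j + m * q]%N.
Proof.
move=> pN; have m_gt0 : 0 < m by case: (posnP m) pN => [->|].
exists (p %% m), (p %/ m); rewrite ltn_pmod // ltn_divLR // [(n * m)%N]mulnC pN.
by rewrite [(m * _)%N]mulnC addnC -divn_eq.
Qed.

Lemma mixed_radix_inj (T U : Type) (f : nat -> T) (lab : T -> U) (a : nat -> U) m n :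
  (forall j q, j < m -> q < n -> lab (f (j + m * q)%N) = a j) ->
  {in gtn m &, injective a} ->
  (forall j, j < m -> {in gtn n &, injective (fun q => f (j + m * q)%N)}) ->
  {in gtn (m * n)%N &, injective f}.
Proof.
move=> lab_f a_inj f_inj p p' /mixed_radix_decomp[j [q [jm qn ->]]].
move=> /mixed_radix_decomp[j' [q' [jm' qn' ->]]] e.
have ej : j = j' by apply: a_inj; rewrite // -(lab_f j q) // e lab_f.
by subst j'; rewrite (f_inj j jm q q').
Qed.

Section HarmoniousSeq.

Variables (gT : finGroupType) (A : {group gT}) (s : seq gT).
Hypothesis harm_s : harmonious_seq A s.

Lemma harmonious_size : size s = #|A|.
Proof. by case: harm_s => /perm_size -> _; rewrite cardE. Qed.

Lemma harmonious_nth_mem i : nth 1 s i \in A.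
Proof.
case: (ltnP i (size s)) => [i_lt | i_ge]; last by rewrite nth_default.
by case: harm_s => /perm_mem sA _; rewrite -mem_enum -sA mem_nth.
Qed.

Lemma harmonious_nth_inj : {in gtn (size s) &, injective (nth 1 s)}.
Proof.
case: harm_s => sA _; apply/mkseq_uniqP.
by rewrite (mkseq_nth 1) (perm_uniq sA) enum_uniq.
Qed.

Lemma harmonious_prod_inj :
  {in gtn (size s) &, injective (fun i => nth 1 s i * nth 1 s (i.+1 %% size s))}.
Proof. by case: harm_s => _ prodA; apply/mkseq_uniqP; rewrite (perm_uniq prodA) enum_uniq. Qed.

Hypotheses (oddA : odd #|A|)
  (sym_s : forall i, 1 <= i < size s -> nth 1 s i * nth 1 s (size s - i) = 1).

Lemma sym_harmonious_nth0 : nth 1 s 0 = 1.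
Proof.
have s1 : (1 : gT) \in s by case: harm_s => /perm_mem ->; rewrite mem_enum group1.
pose i := index 1 s.
have i_lt : i < size s by rewrite index_mem.
have si : nth 1 s i = 1 by rewrite nth_index.
have [i0 | i_gt0] := posnP i; first by rewrite -i0.
have mirror : nth 1 s (size s - i) = 1.
  by have := @sym_s i; rewrite i_gt0 i_lt si mul1g; apply.
have : size s - i = i by apply: harmonious_nth_inj; rewrite ?mirror ?si ?inE //=; lia.
by move: oddA; rewrite -harmonious_size; lia.
Qed.

Lemma sym_harmonious_nth_mod i : nth 1 s i * nth 1 s ((size s - i) %% size s) = 1.
Proof.
have [-> | i_gt0] := posnP i; first by rewrite subn0 modnn sym_harmonious_nth0 mulg1.
case: (ltnP i (size s)) => [i_lt | i_ge]; last first.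
  have -> : size s - i = 0 by lia.
  by rewrite mod0n (nth_default _ i_ge) sym_harmonious_nth0 mulg1.
by rewrite modn_small ?sym_s ?i_gt0 //; lia.
Qed.

End HarmoniousSeq.

Lemma succ_modn_inj n : {in gtn n &, injective (fun q => q.+1 %% n)}.
Proof.
move=> q q'; rewrite !inE /= => qn q'n.
have succ_mod x : x < n -> (x.+1 %% n = if x.+1 == n then 0 else x.+1)%N.
  by move=> xn; case: eqP => [-> | ne]; rewrite ?modnn ?modn_small //; lia.
by rewrite !succ_mod //; do 2 case: eqP; lia.
Qed.

Lemma succ_mixed_radix m n j q : j < m -> q < n ->
  ((j + m * q).+1 %% (m * n) = if j.+1 < m then j.+1 + m * q else m * (q.+1 %% n))%N.
Proof.
move=> jm qn; have mq_le : (m * q.+1 <= m * n)%N by rewrite leq_mul2l qn orbT.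
case: ltnP => [j1m | mj1].
  by rewrite modn_small //; move: mq_le; rewrite mulnS; lia.
have -> : ((j + m * q).+1 = m * q.+1)%N by rewrite mulnS; lia.
by rewrite -muln_modr.
Qed.

Lemma mirror_mixed_radix m n j q : 0 < j < m -> q < n ->
  (m * n - (j + m * q) = m - j + m * (n.-1 - q))%N.
Proof.
move=> jm qn; have -> : n = (n.-1 - q + q).+1 by lia.
by rewrite mulnS mulnDr; lia.
Qed.

Section Extension.

Variables (gT : finGroupType) (G H : {group gT}).
Variables (hs : seq gT) (ks : seq (coset_of H)).
Hypotheses (nsHG : H <| G) (oddH : odd #|H|) (oddGH : odd #|G / H|).
Hypotheses (harm_hs : harmonious_seq H hs) (harm_ks : harmonious_seq (G / H) ks).
Hypothesis sym_hs :
  forall i, 1 <= i < size hs -> nth 1 hs i * nth 1 hs (size hs - i) = 1.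
Hypothesis sym_ks :
  forall i, 1 <= i < size ks -> nth 1 ks i * nth 1 ks (size ks - i) = 1.

Local Notation n := #|H|.
Local Notation m := #|G / H|.
Local Notation r := #|G / H|./2.
Local Notation h := (nth 1 hs).
Local Notation k := (nth 1 ks).

Let m_eq : m = r.*2.+1.
Proof. by rewrite -[m in LHS]odd_double_half oddGH. Qed.

Let size_hs : size hs = n. Proof. exact: harmonious_size. Qed.
Let size_ks : size ks = m. Proof. exact: harmonious_size. Qed.

Let hH q : h q \in H. Proof. exact: harmonious_nth_mem. Qed.

Definition prefix_lift j := \prod_(1 <= i < j.+1) repr (k i).

Local Notation P := prefix_lift.

Lemma prefix_lift0 : P 0 = 1.
Proof. by rewrite /P big_geq. Qed.

Lemma prefix_lift_mem j : P j \in G.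
Proof.
by apply: group_prod => i _; apply: repr_quotient_mem nsHG (harmonious_nth_mem _ _).
Qed.

Lemma prefix_lift_norm j : P j \in 'N(H).
Proof. exact: subsetP (normal_norm nsHG) _ (prefix_lift_mem j). Qed.

Lemma coset_prefix_liftS j : coset H (P j.+1) = coset H (P j) * k j.+1.
Proof.
rewrite /P big_nat_recr //= morphM ?prefix_lift_norm ?repr_coset_norm //.
by rewrite [coset_morphism H (repr _)]coset_reprK.
Qed.

Definition entry j q :=
  if j <= r then (P j.-1)^-1 * h q * P j
  else (P (m - j))^-1 * h (q.+1 %% n) * P (m - j).-1.

Lemma entry_mem j q : entry j q \in G.
Proof.
have hG q' : h q' \in G by apply: subsetP (normal_sub nsHG) _ (hH q').
by rewrite /entry; case: ifP => _; rewrite !groupM ?groupV ?prefix_lift_mem.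
Qed.

Lemma entry0 q : entry 0 q = h q.
Proof. by rewrite /entry leq0n prefix_lift0 invg1 mul1g mulg1. Qed.

Lemma entry_wrap q : entry m q = entry 0 (q.+1 %% n).
Proof.
rewrite entry0 /entry ifF; last by apply/negbTE; rewrite -ltnNge; lia.
by rewrite subnn prefix_lift0 invg1 mul1g mulg1.
Qed.

Lemma coset_entry j q : j < m -> coset H (entry j q) = k j.
Proof.
move=> jm; rewrite /entry; case: ifP => jr; rewrite coset_sandwich ?prefix_lift_norm //.
  case: j {jm jr} => [|j] /=; last by rewrite coset_prefix_liftS mulKg.
  by rewrite prefix_lift0 morph1 invg1 mulg1 (sym_harmonious_nth0 harm_ks).
have mj_gt0 : 0 < m - j by lia.
rewrite -(prednK mj_gt0) coset_prefix_liftS /= invMg mulgKV (prednK mj_gt0).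
apply: invg_inj; rewrite invgK; apply/esym/eqP; rewrite eq_invg_mul -size_ks.
apply/eqP; apply: sym_ks.
by rewrite size_ks; lia.
Qed.

Lemma coset_entryS j q : j < m -> coset H (entry j.+1 q) = k (j.+1 %% m).
Proof.
move=> jm; case: (ltnP j.+1 m) => [j1m | mj1]; first by rewrite modn_small ?coset_entry.
have -> : j.+1 = m by lia.
by rewrite modnn entry_wrap coset_entry.
Qed.

Let h_inj : {in gtn n &, injective h}.
Proof. by rewrite -size_hs; apply: harmonious_nth_inj harm_hs. Qed.

Let h_succ_inj : {in gtn n &, injective (fun q => h (q.+1 %% n))}.
Proof.
move=> q q' qn q'n e; apply: succ_modn_inj qn q'n _.
by apply: h_inj e; rewrite inE ltn_pmod ?cardG_gt0.
Qed.

Lemma entry_inj j : {in gtn n &, injective (entry j)}.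
Proof.
move=> q q' qn q'n; rewrite /entry; case: ifP => _ /mulIg/mulgI; first exact: h_inj.
exact: h_succ_inj.
Qed.

Lemma entry_mul_inj j : {in gtn n &, injective (fun q => entry j q * entry j.+1 q)}.
Proof.
have telescope (a b c x y : gT) : a^-1 * x * b * (b^-1 * y * c) = a^-1 * (x * y) * c.
  by rewrite !mulgA mulgK.
move=> q q' qn q'n; rewrite /entry /=.
have [jr | jr | ->] := ltngtP j r.
- rewrite !telescope => /mulIg/mulgI.
  by move/(sqr_inj_odd oddH (hH q) (hH q'))/h_inj; apply.
- rewrite subnS !telescope.
  by move=> /mulIg/mulgI/(sqr_inj_odd oddH (hH _) (hH _))/h_succ_inj; apply.
- have -> : m - r.+1 = r by lia.
  rewrite !telescope => /mulIg/mulgI.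
  by have := harmonious_prod_inj harm_hs; rewrite size_hs; apply.
Qed.

Lemma entry_mirror j q : 0 < j < m -> q < n ->
  entry j q * entry (m - j) (n.-1 - q) = 1.
Proof.
have mirror i x : 0 < i <= r -> x < n -> entry i x * entry (m - i) (n.-1 - x) = 1.
  move=> /andP[i_gt0 ir] xn; rewrite /entry ir ifF; last by lia.
  have -> : m - (m - i) = i by lia.
  have -> : (n.-1 - x).+1 = n - x by lia.
  rewrite !mulgA mulgK -(mulgA _ (h x)).
  have := sym_harmonious_nth_mod harm_hs oddH sym_hs x; rewrite size_hs => ->.
  by rewrite mulg1 mulVg.
move=> jm qn; case: (leqP j r) => jr; first by apply: mirror; lia.
have mirror_swap : entry (m - j) (n.-1 - q) * entry j q = 1.
  have := mirror (m - j) (n.-1 - q).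
  have -> : m - (m - j) = j by lia.
  have -> : n.-1 - (n.-1 - q) = q by lia.
  by apply; lia.
by move: mirror_swap => /(canRL (mulKg _)) ->; rewrite mulg1 mulVg.
Qed.

Definition lifted p := entry (p %% m) (p %/ m).

Lemma lifted_mixed_radix j q : j < m -> lifted (j + m * q)%N = entry j q.
Proof.
move=> jm; have m_gt0 : 0 < m by lia.
by rewrite /lifted addnC mulnC modnMDl modn_small // divnMDl // divn_small // addn0.
Qed.

Lemma lifted_succ j q : j < m -> q < n ->
  lifted ((j + m * q).+1 %% (m * n)) = entry j.+1 q.
Proof.
move=> jm qn; rewrite succ_mixed_radix //; case: ltnP => [j1m | mj1].
  exact: lifted_mixed_radix.
have -> : j.+1 = m by lia.
by rewrite entry_wrap -[(m * _)%N]add0n lifted_mixed_radix.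
Qed.

Lemma lifted_mirror p : 0 < p < (m * n)%N -> lifted p * lifted (m * n - p)%N = 1.
Proof.
move=> /andP[p_gt0 /mixed_radix_decomp[j [q [jm qn ep]]]]; subst p.
have [j0 | j_gt0] := posnP j; last first.
  by rewrite mirror_mixed_radix ?j_gt0 // !lifted_mixed_radix ?entry_mirror ?j_gt0 //; lia.
subst j; rewrite add0n -mulnBr -[(m * q)%N]add0n -[(m * (n - q))%N]add0n.
rewrite !lifted_mixed_radix // !entry0 -(modn_small (_ : n - q < n)); last by lia.
by have := sym_harmonious_nth_mod harm_hs oddH sym_hs q; rewrite size_hs.
Qed.

Theorem sym_harmonious_extension : symmetric_harmonious G.
Proof.
have card_G : (m * n)%N = #|G|.
  by rewrite card_quotient ?normal_norm // mulnC Lagrange ?normal_sub.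
exists (mkseq lifted (m * n)); split; last first.
  move=> i; rewrite size_mkseq => /andP[i_gt0 iN].
  by rewrite !nth_mkseq ?lifted_mirror ?i_gt0 //; lia.
apply: harmonious_mkseq => // [p _ | | ]; first exact: entry_mem.
  apply: (mixed_radix_inj (lab := coset H) (a := k)).
  - by move=> j q jm _; rewrite lifted_mixed_radix ?coset_entry.
  - by rewrite -size_ks; apply: harmonious_nth_inj harm_ks.
  - move=> j jm q q' qn q'n /=; rewrite !lifted_mixed_radix //; exact: entry_inj.
apply: (mixed_radix_inj (lab := coset H) (a := fun j => k j * k (j.+1 %% m))).
- move=> j q jm qn; rewrite lifted_mixed_radix ?lifted_succ //.
  by rewrite morphM ?(subsetP (normal_norm nsHG)) ?entry_mem //= coset_entry ?coset_entryS.
- by rewrite -size_ks; apply: harmonious_prod_inj harm_ks.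
- move=> j jm q q' qn q'n /=; rewrite !lifted_mixed_radix ?lifted_succ //.
  exact: entry_mul_inj.
Qed.

End Extension.

Theorem lemma1 (gT : finGroupType) (G H : {group gT}) :
  H <| G -> odd #|H| -> odd #|G / H| ->
  symmetric_harmonious H -> symmetric_harmonious (G / H) ->
  symmetric_harmonious G.
Proof.
move=> nsHG oddH oddGH [hs [harm_hs sym_hs]] [ks [harm_ks sym_ks]].
exact: (sym_harmonious_extension nsHG oddH oddGH harm_hs harm_ks sym_hs sym_ks).
Qed.
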